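(* Let $X$ be a vector field on $\mathbb{S}^1$ which is not (the restriction of) a Killing vector field, with support function $\phi_X$. Then any two distinct spacelike support planes of $\mathrm{epi}^+(\phi_X^-)$ at points of $\mathrm{gr}(\phi_X^-|_{\mathbb{D}^2})$ (resp. of $\mathrm{epi}^-(\phi_X^+)$ at points of $\mathrm{gr}(\phi_X^+|_{\mathbb{D}^2})$) intersect in a spacelike geodesic of $\mathbb{D}^2\times\mathbb{R}$.
   Context: $\mathbb{R}^{1,2}$ is $\mathbb{R}^3$ with $\langle x,y\rangle=-x_0y_0+x_1y_1+x_2y_2$; $\mathbb{D}^2$ is the open unit disk, $\mathbb{S}^1$ its boundary. A vector field $X$ on $\mathbb{S}^1$ is $X(z)=iz\phi_X(z)$; it is the restriction of a Killing field iff $\phi_X(z)=\langle(1,z),\sigma\rangle$ for some $\sigma\in\mathbb{R}^{1,2}$. $\phi_X^-(\eta)=\sup\{a(\eta):a\text{ affine},a|_{\mathbb{S}^1}\le\phi_X\}$, $\phi_X^+(\eta)=\inf\{a(\eta):a\text{ affine},a|_{\mathbb{S}^1}\ge\phi_X\}$ for $\eta\in\overline{\mathbb{D}^2}$; $\mathrm{epi}^+(\phi_X^-)=\{(\eta,t)\in\overline{\mathbb{D}^2}\times\mathbb{R}:t\ge\phi_X^-(\eta)\}$, $\mathrm{epi}^-(\phi_X^+)=\{(\eta,t):t\le\phi_X^+(\eta)\}$. Spacelike planes are the non-vertical planes $P_\sigma=\{(\eta,t)\in\mathbb{D}^2\times\mathbb{R}:t=\langle(1,\eta),\sigma\rangle\}$,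 $\sigma\in\mathbb{R}^{1,2}$. $P_\sigma$ is a support plane of $\mathrm{epi}^+(\phi_X^-)$ at a point of $\mathrm{gr}(\phi_X^-|_{\mathbb{D}^2})$ if $\langle(1,\eta),\sigma\rangle\le\phi_X^-(\eta)$ for all $\eta\in\mathbb{D}^2$ with equality at some $\eta_0\in\mathbb{D}^2$ (resp. for $\mathrm{epi}^-(\phi^+_X)$: $\ge\phi_X^+$ with equality somewhere). A spacelike geodesic of $\mathbb{D}^2\times\mathbb{R}$ is a nonempty intersection of $\mathbb{D}^2\times\mathbb{R}$ with an affine line of $\mathbb{R}^3$ that is not vertical (not of the form $\{p\}\times\mathbb{R}$). *)

From HB Require Import structures.
From mathcomp Require Import all_boot all_order all_algebra.
From mathcomp Require Import all_classical all_reals all_analysis.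
Set Implicit Arguments. Unset Strict Implicit. Unset Printing Implicit Defensive.
Import Order.TTheory GRing.Theory Num.Theory.
Local Open Scope classical_set_scope.
Local Open Scope ring_scope.

Section Defs.
Variable R : realType.

(* Points of R^{1,2} are triples ((x0, x1), x2). *)
Definition mink (x y : R * R * R) : R :=
  - (x.1.1 * y.1.1) + x.1.2 * y.1.2 + x.2 * y.2.

Definition lift (eta : R * R) : R * R * R := (1, eta.1, eta.2).

Definition S1 : set (R * R) := [set z | z.1 ^+ 2 + z.2 ^+ 2 = 1].
Definition D2 : set (R * R) := [set z | z.1 ^+ 2 + z.2 ^+ 2 < 1].
Definition cD2 : set (R * R) := [set z | z.1 ^+ 2 + z.2 ^+ 2 <= 1].

Definition affine (c : R * R * R) (eta : R * R) : R :=
  c.1.1 + c.1.2 * eta.1 + c.2 * eta.2.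

Definition killing (phi : R * R -> R) : Prop :=
  exists sigma : R * R * R, forall z, S1 z -> phi z = mink (lift z) sigma.

Definition phi_minus (phi : R * R -> R) (eta : R * R) : R :=
  sup [set affine c eta | c in [set c | forall z, S1 z -> affine c z <= phi z]].

Definition phi_plus (phi : R * R -> R) (eta : R * R) : R :=
  inf [set affine c eta | c in [set c | forall z, S1 z -> phi z <= affine c z]].

Definition plane (sigma : R * R * R) : set ((R * R) * R) :=
  [set p | D2 p.1 /\ p.2 = mink (lift p.1) sigma].

Definition support_minus (phi : R * R -> R) (sigma : R * R * R) : Prop :=
  (forall eta, D2 eta -> mink (lift eta) sigma <= phi_minus phi eta) /\
  (exists eta0, D2 eta0 /\ mink (lift eta0) sigma = phi_minus phi eta0).

Definition support_plus (phi : R * R -> R) (sigma : R * R * R) : Prop :=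
  (forall eta, D2 eta -> phi_plus phi eta <= mink (lift eta) sigma) /\
  (exists eta0, D2 eta0 /\ mink (lift eta0) sigma = phi_plus phi eta0).

(* S is a spacelike geodesic of D^2 x R: the nonempty intersection of
   D^2 x R with a non-vertical affine line {p + t v} of R^3 *)
Definition spacelike_geodesic (S : set ((R * R) * R)) : Prop :=
  exists (p v : (R * R) * R),
    (v.1 <> (0, 0)) /\
    S = [set q | D2 q.1 /\ exists t : R,
                   q = ((p.1.1 + t * v.1.1, p.1.2 + t * v.1.2), p.2 + t * v.2)] /\
    S !=set0.

End Defs.

From Pilot Require Import Defs.
From mathcomp Require Import all_boot all_order all_algebra.
From mathcomp Require Import all_classical all_reals all_analysis.
From mathcomp Require Import ring lra.
Set Implicit Arguments. Unset Strict Implicit. Unset Printing Implicit Defensive.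
Import numFieldNormedType.Exports.
Import Order.TTheory GRing.Theory Num.Theory.
Local Open Scope classical_set_scope.
Local Open Scope ring_scope.

(* Over D^2 the difference of the heights of two planes is affine. At the
   contact point of one support plane it has one sign and at the contact point
   of the other the opposite sign, so it vanishes somewhere on the segment
   joining them, which lies in the convex disk D^2.  Two distinct non-vertical
   planes meeting above a point of D^2 meet along a non-vertical line through
   that point. *)

Section SpacelikePlanes.
Variable R : realType.
Implicit Types (sigma tau : R * R * R) (a b w : R * R) (s : R).

Definition interp a b s : R * R :=
  ((1 - s) * a.1 + s * b.1, (1 - s) * a.2 + s * b.2).

Lemma D2_interp a b s : D2 a -> D2 b -> 0 <= s <= 1 -> D2 (interp a b s).
Proof.
case: a b => [a1 a2] [b1 b2]; rewrite /D2 /= => Da Db /andP[s_ge0 s_le1].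
have -> : ((1 - s) * a1 + s * b1) ^+ 2 + ((1 - s) * a2 + s * b2) ^+ 2 =
  (1 - s) * (a1 ^+ 2 + a2 ^+ 2) + s * (b1 ^+ 2 + b2 ^+ 2)
  - s * (1 - s) * ((a1 - b1) ^+ 2 + (a2 - b2) ^+ 2) by ring.
have dist_ge0 : 0 <= s * (1 - s) * ((a1 - b1) ^+ 2 + (a2 - b2) ^+ 2).
  by rewrite mulr_ge0 ?addr_ge0 ?sqr_ge0 ?mulr_ge0 ?subr_ge0.
have a_part : (1 - s) * (a1 ^+ 2 + a2 ^+ 2) <= 1 - s by nra.
have [->|s_neq0] := eqVneq s 0; first by lra.
have s_gt0 : 0 < s by rewrite lt_def s_neq0.
have b_part : s * (b1 ^+ 2 + b2 ^+ 2) < s by nra.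
lra.
Qed.

Lemma mink_lift_interp sigma a b s :
  mink (Defs.lift (interp a b s)) sigma =
  (1 - s) * mink (Defs.lift a) sigma + s * mink (Defs.lift b) sigma.
Proof. by rewrite /mink /Defs.lift /=; ring. Qed.

Lemma planes_cross sigma tau a b : D2 a -> D2 b ->
  mink (Defs.lift a) sigma <= mink (Defs.lift a) tau ->
  mink (Defs.lift b) tau <= mink (Defs.lift b) sigma ->
  exists2 w, D2 w & mink (Defs.lift w) sigma = mink (Defs.lift w) tau.
Proof.
move=> Da Db le_a le_b.
pose f w := mink (Defs.lift w) sigma - mink (Defs.lift w) tau.
have f_interp s : f (interp a b s) = (1 - s) * f a + s * f b.
  by rewrite /f !mink_lift_interp; ring.
have fa_le0 : f a <= 0 by rewrite subr_le0.
have fb_ge0 : 0 <= f b by rewrite subr_ge0.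
suff [s s01 fs0] : exists2 s, 0 <= s <= 1 & f (interp a b s) = 0.
  exists (interp a b s); first exact: D2_interp.
  by apply/eqP; rewrite -subr_eq0; apply/eqP.
have [fab|fab] := eqVneq (f b - f a) 0.
  by exists 0; rewrite ?lexx ?ler01 // f_interp; lra.
have fab_gt0 : 0 < f b - f a by rewrite lt_def fab; lra.
exists (- f a / (f b - f a)).
  by rewrite divr_ge0 ?ler_pdivrMr /=; lra.
by rewrite f_interp; field.
Qed.

Lemma support_minus_cross phi sigma tau :
  support_minus phi sigma -> support_minus phi tau ->
  exists2 w, D2 w & mink (Defs.lift w) sigma = mink (Defs.lift w) tau.
Proof.
move=> [sigma_le [a [Da Ea]]] [tau_le [b [Db Eb]]].
by apply: (planes_cross Db Da); [rewrite Eb sigma_le | rewrite Ea tau_le].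
Qed.

Lemma support_plus_cross phi sigma tau :
  support_plus phi sigma -> support_plus phi tau ->
  exists2 w, D2 w & mink (Defs.lift w) sigma = mink (Defs.lift w) tau.
Proof.
move=> [sigma_ge [a [Da Ea]]] [tau_ge [b [Db Eb]]].
by apply: (planes_cross Da Db); [rewrite Ea tau_ge | rewrite Eb sigma_ge].
Qed.

Lemma orthogonal_collinear (d1 d2 u1 u2 : R) :
  (d1, d2) <> (0, 0) -> d1 * u1 + d2 * u2 = 0 ->
  exists t, u1 = t * - d2 /\ u2 = t * d1.
Proof.
move=> d_neq0 orth.
have N_neq0 : d1 ^+ 2 + d2 ^+ 2 != 0.
  apply/negP => /eqP N0; apply: d_neq0.
  have := sqr_ge0 d1; have := sqr_ge0 d2 => d2_sq_ge0 d1_sq_ge0.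
  by congr (_, _); apply/eqP; rewrite -sqrf_eq0; apply/eqP; lra.
exists ((d1 * u2 - d2 * u1) / (d1 ^+ 2 + d2 ^+ 2)).
split; apply: (mulIf N_neq0); rewrite mulrAC divfK //; apply/eqP;
  rewrite -subr_eq0.
- by rewrite -(mulr0 d1) -orth; apply/eqP; ring.
- by rewrite -(mulr0 d2) -orth; apply/eqP; ring.
Qed.

Lemma plane_meet_geodesic sigma tau w : D2 w ->
  mink (Defs.lift w) sigma = mink (Defs.lift w) tau -> sigma <> tau ->
  spacelike_geodesic (plane sigma `&` plane tau).
Proof.
case: sigma tau w => [[s0 s1] s2] [[t0 t1] t2] [x y] Dw.
rewrite /mink /Defs.lift /= => meet_w sigma_neq_tau.
set d1 := s1 - t1; set d2 := s2 - t2.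
have d_neq0 : (d1, d2) <> (0, 0).
  case=> d1_0 d2_0; apply: sigma_neq_tau.
  have s1_t1 : s1 = t1 by apply/eqP; rewrite -subr_eq0 -/d1 d1_0.
  have s2_t2 : s2 = t2 by apply/eqP; rewrite -subr_eq0 -/d2 d2_0.
  by rewrite -s1_t1 -s2_t2 in meet_w *; congr (_, _, _); lra.
(* The heights differ by the affine map eta |-> d1 (eta.1 - x) + d2 (eta.2 - y),
   which vanishes on the line through w spanned by (-d2, d1). *)
pose p : R * R * R := ((x, y), - (1 * s0) + x * s1 + y * s2).
exists p, ((- d2, d1), s1 * - d2 + s2 * d1).
split; first by case=> d2_0 d1_0; apply: d_neq0; congr (_, _); lra.
split; last by exists p.
rewrite /plane /mink /Defs.lift; apply/seteqP; split => -[[a b] c] /=.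
  move=> [[Dab ->] [_ c_tau]]; split => //.
  have [t [a_x b_y]] : exists t, a - x = t * - d2 /\ b - y = t * d1.
    by apply: orthogonal_collinear => //; rewrite /d1 /d2; lra.
  exists t; rewrite -[a](subrK x) -[b](subrK y) a_x b_y.
  by congr (_, _, _); ring.
move=> [Dab [t [a_eq b_eq c_eq]]]; subst a b c.
split; split => //; first by ring.
by rewrite meet_w /d1 /d2; ring.
Qed.

End SpacelikePlanes.

Theorem lemma4p1 (R : realType) (phi : R * R -> R)
    (phi_cont : {within @S1 R, continuous phi})
    (notK : ~ killing phi) :
  (forall sigma tau : R * R * R,
      support_minus phi sigma -> support_minus phi tau ->
      plane sigma <> plane tau ->
      spacelike_geodesic (plane sigma `&` plane tau)) /\
  (forall sigma tau : R * R * R,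
      support_plus phi sigma -> support_plus phi tau ->
      plane sigma <> plane tau ->
      spacelike_geodesic (plane sigma `&` plane tau)).
Proof.
split=> sigma tau sup_sigma sup_tau plane_neq.
  have [w Dw meet_w] := support_minus_cross sup_sigma sup_tau.
  apply: plane_meet_geodesic Dw meet_w _ => sigma_tau.
  by rewrite sigma_tau in plane_neq.
have [w Dw meet_w] := support_plus_cross sup_sigma sup_tau.
apply: plane_meet_geodesic Dw meet_w _ => sigma_tau.
by rewrite sigma_tau in plane_neq.
Qed.
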